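(* Consider the stochastic rolling-window dispatch problem $P_t$ for window $\mathscr{H}_t=\{t,\dots,t+W-1\}$ described in the context, and let $(\phi^*,\underline{\delta}^*,\bar{\delta}^*,\dots)$ be an optimal dual solution (satisfying the KKT conditions together with an optimal primal solution). Then for every ESR $i$, \[\phi^*_{it}=\Delta \delta_{it}^*+\sum_{t'=t+1}^{t+W-1}\sum_{k=1}^K\Delta \delta_{it'k}^*,\] where $\Delta \delta_{it}^*:=\underline{\delta}_{it}^*-\bar{\delta}_{it}^*$ and $\Delta \delta_{it'k}^*:=\underline{\delta}_{it'k}^*-\bar{\delta}_{it'k}^*$.
   Context: Single-bus market with $N$ energy storage resources (ESRs) indexed by $i$. ESR $i$ has charging/discharging efficiencies $\xi_i^{C},\xi_i^{D}\in(0,1]$, state-of-charge (SOC) limits $\underline{E}_i\le\bar{E}_i$, charging/discharging power limits $(\underline{g}_i^{C},\bar{g}_i^{C})$, $(\underline{g}_i^{D},\bar{g}_i^{D})$, ramp limits $\underline{r}_i^{C},\bar{r}_i^{C},\underline{r}_i^{D},\bar{r}_i^{D}$, and bid-in charging benefit and discharging cost functions $f^{C}_{it},f^{D}_{it}$. At interval $t$ the operator solves, over the window $\mathscr{H}_t=\{t,\dots,t+W-1\}$, given realized inelastic demand $d_t$, $K$ demand forecast scenarios $\hat d_{t'k}$ ($t'\in\mathscr{H}_t\setminus\{t\}$) with probabilities $\epsilon_k$, and the previously realized values $g^{C*}_{i(t-1)},g^{D*}_{i(t-1)},E^*_{i(t-1)}$, the problem $P_t$: minimize $\sum_i\big(f^{D}_{it}(g^{D}_{it})-f^{C}_{it}(g^{C}_{it})\big)+\sum_k\epsilon_k\sum_{t'\in\mathscr{H}_t\setminus\{t\}}\sum_i\big(f^{D}_{it'}(g^{D}_{it'k})-f^{C}_{it'}(g^{C}_{it'k})\big)$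 subject to, for all $i$, $k$, $t'\in\mathscr{H}_t\setminus\{t\}$ (with the convention that in scenario $k$ the interval-$t$ variables are the binding variables $g_{it},E_{it}$): power balance $\sum_i(g^{D}_{it}-g^{C}_{it})=d_t$ (multiplier $\lambda_t$) and $\sum_i(g^{D}_{it'k}-g^{C}_{it'k})=\hat d_{t'k}$; SOC transition $E_{it}-E^*_{i(t-1)}=\xi_i^{C}g^{C}_{it}-g^{D}_{it}/\xi_i^{D}$ (multiplier $\phi_{it}$) and $E_{it'k}-E_{i(t'-1)k}=\xi_i^{C}g^{C}_{it'k}-g^{D}_{it'k}/\xi_i^{D}$ (multiplier $\phi_{it'k}$); SOC limits $\underline{E}_i\le E_{it}\le\bar E_i$ (multipliers $\underline{\delta}_{it},\bar\delta_{it}$) and $\underline{E}_i\le E_{it'k}\le\bar E_i$ (multipliers $\underline{\delta}_{it'k},\bar\delta_{it'k}$); ramping $-\underline{r}_i^{C}\le g^{C}_{it}-g^{C*}_{i(t-1)}\le\bar r_i^{C}$ (multipliers $\underline{\mu}^{C}_{it},\bar\mu^{C}_{it}$), $-\underline{r}_i^{C}\le g^{C}_{it'k}-g^{C}_{i(t'-1)k}\le\bar r_i^{C}$ (multipliers $\underline{\mu}^{C}_{it'k},\bar\mu^{C}_{it'k}$), and the same with $D$ in place of $C$; power limits $\underline g_i^{C}\le g^{C}\le\bar g_i^{C}$, $\underline g_i^{D}\le g^{D}\le\bar g_i^{D}$ for all binding and scenario variables (multipliers $\underline\rho,\bar\rho$). Multipliers of inequality constraints are nonnegative and enter the Lagrangian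 as $\bar\mu(x-\text{upper})+\underline\mu(\text{lower}-x)$; an equality constraint written as $\text{LHS}=\text{RHS}$ enters as (multiplier)$\times$(LHS$-$RHS), except power balance, which enters as $\lambda_t\big(d_t-\sum_i(g^D_{it}-g^C_{it})\big)$ (and analogously for scenarios). *)

From HB Require Import structures.
From mathcomp Require Import all_boot all_order all_algebra.
From mathcomp Require Import all_classical all_reals all_analysis.
Set Implicit Arguments. Unset Strict Implicit. Unset Printing Implicit Defensive.
Import Order.TTheory GRing.Theory Num.Theory.
Import numFieldNormedType.Exports.
Local Open Scope ring_scope.

(* Market data of the problem P_t (N ESRs, K scenarios).
   Scenario quantities are indexed by the offset j = t' - t, 1 <= j <= W-1. *)
Record market (R : realType) (N K : nat) := Market {
  xiC : 'I_N -> R;  xiD : 'I_N -> R;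
  Elo : 'I_N -> R;  Ehi : 'I_N -> R;
  gClo : 'I_N -> R; gChi : 'I_N -> R;
  gDlo : 'I_N -> R; gDhi : 'I_N -> R;
  rClo : 'I_N -> R; rChi : 'I_N -> R;
  rDlo : 'I_N -> R; rDhi : 'I_N -> R;
  fC : 'I_N -> nat -> R -> R;                 (* f^C_{i t'} (absolute time t') *)
  fD : 'I_N -> nat -> R -> R;
  dem : R;
  dhat : nat -> 'I_K -> R;
  eps : 'I_K -> R;
  gCstar : 'I_N -> R; gDstar : 'I_N -> R; Estar : 'I_N -> R (* realized t-1 *)
}.

Definition wf_market (R : realType) (N K : nat) (m : market R N K) : Prop :=
  (forall i, 0 < xiC m i <= 1 /\ 0 < xiD m i <= 1 /\ Elo m i <= Ehi m i) /\
  (forall k, 0 <= eps m k) /\ \sum_(k < K) eps m k = 1.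

(* A "slot": None = the binding interval t; Some (j,k) = interval t+j in scenario k. *)
Definition slot (K : nat) := option (nat * 'I_K).

Definition valid (K W : nat) (s : slot K) : bool :=
  match s with None => true | Some (j, _) => (1 <= j < W)%N end.

Definition ssum (R : realType) (K W : nat) (F : slot K -> R) : R :=
  F None + \sum_(k < K) \sum_(1 <= j < W) F (Some (j, k)).

Definition tm (K : nat) (t : nat) (s : slot K) : nat :=
  match s with None => t | Some (j, _) => (t + j)%N end.

Definition weight (R : realType) (N K : nat) (m : market R N K) (s : slot K) : R :=
  match s with None => 1 | Some (_, k) => eps m k end.

Definition demand (R : realType) (N K : nat) (m : market R N K) (s : slot K) : R :=
  match s with None => dem m | Some (j, k) => dhat m j k end.

Record prim (R : realType) (N K : nat) := Prim {
  pgC : 'I_N -> slot K -> R; pgD : 'I_N -> slot K -> R; pE : 'I_N -> slot K -> R }.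

Record dual (R : realType) (N K : nat) := Dual {
  lam : slot K -> R;
  phi : 'I_N -> slot K -> R;
  dlo : 'I_N -> slot K -> R; dhi : 'I_N -> slot K -> R;
  muClo : 'I_N -> slot K -> R; muChi : 'I_N -> slot K -> R;
  muDlo : 'I_N -> slot K -> R; muDhi : 'I_N -> slot K -> R;
  rhoClo : 'I_N -> slot K -> R; rhoChi : 'I_N -> slot K -> R;
  rhoDlo : 'I_N -> slot K -> R; rhoDhi : 'I_N -> slot K -> R
}.

Definition prevv (R : realType) (N K : nat) (x : 'I_N -> slot K -> R)
  (star : 'I_N -> R) (i : 'I_N) (s : slot K) : R :=
  match s with
  | None => star i
  | Some (j, k) => if j == 1%N then x i None else x i (Some (j.-1, k))
  end.

Section Problem.
Variables (R : realType) (N K : nat) (m : market R N K) (W t : nat).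

Definition objective (p : prim R N K) : R :=
  ssum W (fun s => weight m s *
    \sum_(i < N) (fD m i (tm t s) (pgD p i s) - fC m i (tm t s) (pgC p i s))).

Definition soc_res (p : prim R N K) i s : R :=
  pE p i s - prevv (pE p) (Estar m) i s - (xiC m i * pgC p i s - pgD p i s / xiD m i).
Definition rampC (p : prim R N K) i s : R := pgC p i s - prevv (pgC p) (gCstar m) i s.
Definition rampD (p : prim R N K) i s : R := pgD p i s - prevv (pgD p) (gDstar m) i s.

Definition feasible (p : prim R N K) : Prop :=
  forall s : slot K, valid W s ->
    \sum_(i < N) (pgD p i s - pgC p i s) = demand m s /\
    forall i : 'I_N,
      soc_res p i s = 0 /\
      Elo m i <= pE p i s <= Ehi m i /\
      - rClo m i <= rampC p i s <= rChi m i /\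
      - rDlo m i <= rampD p i s <= rDhi m i /\
      gClo m i <= pgC p i s <= gChi m i /\
      gDlo m i <= pgD p i s <= gDhi m i.

Definition optimal (p : prim R N K) : Prop :=
  feasible p /\ forall q, feasible q -> objective p <= objective q.

Definition lagrangian (p : prim R N K) (d : dual R N K) : R :=
  objective p +
  ssum W (fun s => lam d s * (demand m s - \sum_(i < N) (pgD p i s - pgC p i s)) +
    \sum_(i < N) (
        phi d i s * soc_res p i s
      + dhi d i s * (pE p i s - Ehi m i) + dlo d i s * (Elo m i - pE p i s)
      + muChi d i s * (rampC p i s - rChi m i) + muClo d i s * (- rClo m i - rampC p i s)
      + muDhi d i s * (rampD p i s - rDhi m i) + muDlo d i s * (- rDlo m i - rampD p i s)
      + rhoChi d i s * (pgC p i s - gChi m i) + rhoClo d i s * (gClo m i - pgC p i s)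
      + rhoDhi d i s * (pgD p i s - gDhi m i) + rhoDlo d i s * (gDlo m i - pgD p i s))).

Definition dual_feasible (d : dual R N K) : Prop :=
  forall i s, valid W s ->
    0 <= dlo d i s /\ 0 <= dhi d i s /\ 0 <= muClo d i s /\ 0 <= muChi d i s /\
    0 <= muDlo d i s /\ 0 <= muDhi d i s /\ 0 <= rhoClo d i s /\ 0 <= rhoChi d i s /\
    0 <= rhoDlo d i s /\ 0 <= rhoDhi d i s.

Definition compl_slack (p : prim R N K) (d : dual R N K) : Prop :=
  forall i s, valid W s ->
    dhi d i s * (pE p i s - Ehi m i) = 0 /\ dlo d i s * (Elo m i - pE p i s) = 0 /\
    muChi d i s * (rampC p i s - rChi m i) = 0 /\ muClo d i s * (- rClo m i - rampC p i s) = 0 /\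
    muDhi d i s * (rampD p i s - rDhi m i) = 0 /\ muDlo d i s * (- rDlo m i - rampD p i s) = 0 /\
    rhoChi d i s * (pgC p i s - gChi m i) = 0 /\ rhoClo d i s * (gClo m i - pgC p i s) = 0 /\
    rhoDhi d i s * (pgD p i s - gDhi m i) = 0 /\ rhoDlo d i s * (gDlo m i - pgD p i s) = 0.

Definition upd (x : 'I_N -> slot K -> R) (i : 'I_N) (s : slot K) (y : R) :=
  fun i' s' => if (i' == i) && (s' == s) then y else x i' s'.

Definition updC p i s y := Prim (upd (pgC p) i s y) (pgD p) (pE p).
Definition updD p i s y := Prim (pgC p) (upd (pgD p) i s y) (pE p).
Definition updE p i s y := Prim (pgC p) (pgD p) (upd (pE p) i s y).

Definition stationary (p : prim R N K) (d : dual R N K) : Prop :=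
  forall i s, valid W s ->
    is_derive (pgC p i s) (1 : R) (fun y : R => lagrangian (updC p i s y) d) 0 /\
    is_derive (pgD p i s) (1 : R) (fun y : R => lagrangian (updD p i s y) d) 0 /\
    is_derive (pE p i s) (1 : R) (fun y : R => lagrangian (updE p i s y) d) 0.

Definition KKT (p : prim R N K) (d : dual R N K) : Prop :=
  feasible p /\ dual_feasible d /\ compl_slack p d /\ stationary p d.

End Problem.

From HB Require Import structures.
From mathcomp Require Import all_boot all_order all_algebra.
From mathcomp Require Import all_classical all_reals all_analysis.
From mathcomp Require Import ring lra.
Set Implicit Arguments.
Unset Strict Implicit.
Unset Printing Implicit Defensive.
Import Order.TTheory GRing.Theory Num.Theory.
Import numFieldNormedType.Exports.
Local Open Scope ring_scope.

(* The Lagrangian is affine in the SOC variables, so stationarity in [E_s]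
   says that its slope vanishes.  The SOC transition couples [E_s] with the
   SOC of its successors (every scenario at t+1 for the binding interval, the
   next interval of the same scenario otherwise); summing by parts along the
   scenario tree, that slope is [phi_s - (sum of phi over the successors of s)
   + dhi_s - dlo_s].  Hence [phi_s] is [dlo_s - dhi_s] plus [phi] summed over
   the successors, and unrolling this backward recursion from the end of the
   window gives the claim. *)

Lemma is_derive_affine (R : numFieldType) (f : R -> R) (x a c l : R) :
  (forall y, f y = a + (y - x) * c) -> is_derive x 1 f l -> l = c.
Proof.
have dc : is_derive x 1 (fun y => a + (y - x) * c) c.
  by apply: is_derive_eq; rewrite subrr scale0r add0r subr0 scaler1 add0r.
move=> fE; have -> : f = (fun y => a + (y - x) * c) by apply/funext.
by move=> [_ <-]; case: dc.
Qed.

Lemma sum_backward_recurrence (V : zmodType) (W n : nat) (u d : nat -> V) :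
  (forall j, (n <= j < W)%N -> u j = d j + u j.+1) ->
  (forall j, (W <= j)%N -> u j = 0) ->
  u n = \sum_(n <= j < W) d j.
Proof.
move=> rec u0; have [Wn | nW] := leqP W n; first by rewrite u0 // big_geq.
rewrite (@telescope_sumr_eq _ n W (fun j => - u j) d (ltnW nW)) => [|j /rec ->].
  by rewrite (u0 W) // oppr0 sub0r opprK.
by rewrite opprK addrC addrK.
Qed.

Lemma sum_mul_prev (R : pzRingType) (W : nat) (f g : nat -> R) (a : R) :
  \sum_(1 <= j < W) f j * (if j == 1%N then a else g j.-1) =
  (if (1 < W)%N then f 1%N else 0) * a +
  \sum_(1 <= j < W) (if (j.+1 < W)%N then f j.+1 else 0) * g j.
Proof.
case: W => [|[|W]]; try by rewrite !big_geq // mul0r addr0.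
rewrite big_nat_recl // [in RHS]big_nat_recr //= ltnn mul0r addr0.
congr (_ + _); apply: eq_big_nat => j /andP [j1 jW].
by case: j j1 jW => // j _ jW; rewrite ltnS jW.
Qed.

Section WindowSums.
Variables (R : realType) (K W : nat).

Lemma eq_ssum (F G : slot K -> R) :
  (forall s, valid W s -> F s = G s) -> ssum W F = ssum W G.
Proof.
move=> FG; rewrite /ssum FG //; congr (_ + _); apply: eq_bigr => k _.
by apply: eq_big_nat => j jW; apply: FG.
Qed.

Lemma ssumD (F G : slot K -> R) :
  ssum W (fun s => F s + G s) = ssum W F + ssum W G.
Proof.
rewrite /ssum addrACA -big_split; congr (_ + _).
by apply: eq_bigr => k _; rewrite big_split.
Qed.

Lemma ssum_sumr (I : finType) (F : I -> slot K -> R) :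
  ssum W (fun s => \sum_(i : I) F i s) = \sum_(i : I) ssum W (F i).
Proof.
rewrite /ssum big_split /=; congr (_ + _).
by rewrite [RHS]exchange_big; apply: eq_bigr => k _; rewrite [RHS]exchange_big.
Qed.

Lemma ssum_delta (F : slot K -> R) (s : slot K) :
  valid W s -> ssum W (fun s' => if s' == s then F s' else 0) = F s.
Proof.
rewrite /ssum; case: s => [[j0 k0]|] /= vs; last first.
  by rewrite big1 ?addr0 // => k _; exact: big1_eq.
rewrite add0r (bigD1 k0) //= [X in _ + X]big1 => [|k k0k]; last first.
  by apply: big1 => j _; rewrite (inj_eq Some_inj) xpair_eqE (negbTE k0k) andbF.
rewrite (bigD1_seq j0) ?mem_index_iota ?iota_uniq //= eqxx big1 ?addr0 //.
by move=> j /negbTE j0j; rewrite (inj_eq Some_inj) xpair_eqE j0j.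
Qed.

Lemma sum_ssum_upd (N : nat) (x G : 'I_N -> slot K -> R) i s y : valid W s ->
  \sum_(i' < N) ssum W (fun s' => (upd x i s y i' s' - x i' s') * G i' s') =
  (y - x i s) * G i s.
Proof.
move=> vs; rewrite (bigD1 i) //= big1 ?addr0 => [|i' i'i].
  rewrite -(ssum_delta (fun s' => (y - x i s') * G i s') vs); apply: eq_ssum => s' _.
  by rewrite /upd eqxx /=; case: eqP => [-> //|_]; rewrite subrr mul0r.
rewrite -[RHS](ssum_delta (fun _ => 0) vs); apply: eq_ssum => s' _.
by rewrite /upd (negbTE i'i) subrr mul0r if_same.
Qed.

(* Zero outside the window: the last interval of a scenario has no successor. *)
Definition scenario_at (x : slot K -> R) (k : 'I_K) (j : nat) : R :=
  if (j < W)%N then x (Some (j, k)) else 0.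

Definition succ_sum (x : slot K -> R) (s : slot K) : R :=
  match s with
  | None => \sum_(k < K) scenario_at x k 1
  | Some (j, k) => scenario_at x k j.+1
  end.

Lemma ssum_by_parts (N : nat) (x : slot K -> R) (D : 'I_N -> slot K -> R) i :
  ssum W (fun s => x s * (D i s - prevv D (fun _ => 0) i s)) =
  ssum W (fun s => D i s * (x s - succ_sum x s)).
Proof.
have scenario k : \sum_(1 <= j < W) x (Some (j, k)) *
      (D i (Some (j, k)) - prevv D (fun _ => 0) i (Some (j, k))) =
    \sum_(1 <= j < W) D i (Some (j, k)) * (x (Some (j, k)) - succ_sum x (Some (j, k)))
    - scenario_at x k 1 * D i None.
  under eq_bigr do rewrite mulrBr.
  rewrite sumrB /prevv /= (sum_mul_prev _ (fun j => x (Some (j, k))) (fun j => D i (Some (j, k)))).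
  rewrite opprD addrCA addrC; congr (_ - _).
  rewrite -sumrB; apply: eq_bigr => j _.
  by rewrite [RHS]mulrBr !(mulrC (D i _)).
rewrite /ssum; under eq_bigr do rewrite scenario.
by rewrite sumrB -mulr_suml /=; ring.
Qed.

End WindowSums.

Section Stationarity.
Variables (R : realType) (N K : nat) (m : market R N K) (W t : nat).

Definition lagrangian_dE (d : dual R N K) (i : 'I_N) (s : slot K) : R :=
  phi d i s - succ_sum W (phi d i) s + dhi d i s - dlo d i s.

Lemma lagrangian_setE (p : prim R N K) (d : dual R N K) (E : 'I_N -> slot K -> R) :
  lagrangian m W t (Prim (pgC p) (pgD p) E) d = lagrangian m W t p d +
  \sum_(i < N) ssum W (fun s => (E i s - pE p i s) * lagrangian_dE d i s).
Proof.
set D := fun i s => E i s - pE p i s.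
have parts i : ssum W (fun s => D i s * lagrangian_dE d i s) =
    ssum W (fun s => phi d i s * (D i s - prevv D (fun _ => 0) i s)
                     + (dhi d i s - dlo d i s) * D i s).
  rewrite ssumD ssum_by_parts -ssumD.
  by apply: eq_ssum => s _; rewrite /lagrangian_dE; ring.
under eq_bigr do rewrite parts.
rewrite -ssum_sumr /lagrangian -[in RHS]addrA; congr (_ + _).
rewrite -ssumD; apply: eq_ssum => s _; rewrite -addrA -big_split /=; congr (_ + _).
apply: eq_bigr => i _; rewrite /soc_res /D.
by case: s => [[j k]|] /=; [case: eqP => _ |]; ring.
Qed.

Lemma lagrangian_updE (p : prim R N K) (d : dual R N K) i s y :
  valid W s ->
  lagrangian m W t (updE p i s y) d =
  lagrangian m W t p d + (y - pE p i s) * lagrangian_dE d i s.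
Proof. by move=> vs; rewrite lagrangian_setE sum_ssum_upd. Qed.

Lemma KKT_lagrangian_dE (p : prim R N K) (d : dual R N K) i s :
  KKT m W t p d -> valid W s -> lagrangian_dE d i s = 0.
Proof.
move=> [_ [_ [_ stat]]] vs; have [_ [_ dE]] := stat i s vs.
by apply/esym/(is_derive_affine _ dE) => y; rewrite lagrangian_updE.
Qed.

End Stationarity.

Theorem lemma1 (R : realType) (N K W t : nat) (m : market R N K)
  (p : prim R N K) (d : dual R N K) :
  wf_market m -> optimal m W t p -> KKT m W t p d ->
  forall i : 'I_N,
    phi d i None =
      (dlo d i None - dhi d i None)
      + \sum_(1 <= j < W) \sum_(k < K) (dlo d i (Some (j, k)) - dhi d i (Some (j, k))).
Proof.
move=> _ _ kkt i.
have dE0 s : valid W s -> lagrangian_dE W d i s = 0 := KKT_lagrangian_dE i kkt.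
have scenario k : scenario_at W (phi d i) k 1 =
    \sum_(1 <= j < W) (dlo d i (Some (j, k)) - dhi d i (Some (j, k))).
  apply: sum_backward_recurrence => [j jW | j Wj]; last first.
    by rewrite /scenario_at ltnNge Wj.
  have := dE0 (Some (j, k)) jW; rewrite /lagrangian_dE /= => dE.
  by rewrite {1}/scenario_at (andP jW).2; lra.
rewrite exchange_big /= -(eq_bigr _ (fun k _ => scenario k)).
by have := dE0 None isT; rewrite /lagrangian_dE /= => dE; lra.
Qed.
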